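(* Let $m\ge1$ and $n\ge0$, and let $\phi$ be an $r$-simplex of $(\Delta^1)^{m+n}$, viewed as a function $\phi\colon\{1,\dots,m+n\}\to\{1,\dots,r,\pm\infty\}$, which is unmarked in $(\Delta^1)^{\otimes(m+n)}$. Then $\phi$ is marked in $T(\widetilde\square^m)\otimes T(\square^n)=(\Delta^1)^{\otimes m}_e\otimes(\Delta^1)^{\otimes n}$ if and only if: (1) $r\ge m$; (2) $\phi(i)=i$ for all $1\le i\le m$; and (3) there does not exist a sequence $m<i_m<i_{m+1}<\dots<i_r\le m+n$ with $\phi(i_p)=p$ for all $m\le p\le r$.
   Context: An $r$-simplex of the simplicial set $(\Delta^1)^N=N([1]^N)$ is identified with the function $\phi\colon\{1,\dots,N\}\to\{1,\dots,r,\pm\infty\}$ defined by: $\phi(i)=+\infty$ if the $i$-th coordinate of the last vertex is $0$; $\phi(i)=p$ if the $i$-th coordinate of vertex $p-1$ is $0$ and of vertex $p$ is $1$; $\phi(i)=-\infty$ if the $i$-th coordinate of vertex $0$ is $1$ (this is a bijection). Marked simplicial sets have marked simplices of positive dimension containing all degenerate ones. Verity's Gray tensor $X\otimes Y$ has underlying $X\times Y$, with $(x,y)\in X_r\times Y_r$ marked iff for every $0\le i\le r$ the restriction of $x$ to vertices $\{0,\dots,i\}$ is marked or the restriction of $y$ to vertices $\{i,\dots,r\}$ is marked. $(\Delta^1)^{\otimes N}$ is the $N$-fold Gray tensor power of minimally marked $\Delta^1$; in it, an $r$-simplex $\phi$ is unmarked iff there exist $1\le i_1<\dots<i_r\le N$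 with $\phi(i_p)=p$ for all $p$. $(\Delta^1)^{\otimes m}_e$ is $(\Delta^1)^{\otimes m}$ with additionally the $m$-simplex $\iota_m$ (given by $\iota_m(i)=i$) marked. Here $(\Delta^1)^{\otimes m}_e\otimes(\Delta^1)^{\otimes n}$ is identified with a marking on $(\Delta^1)^{m+n}$ via $(\Delta^1)^m\times(\Delta^1)^n=(\Delta^1)^{m+n}$, the first $m$ coordinates coming from the first factor. *)

From mathcomp Require Import all_boot.
Set Implicit Arguments. Unset Strict Implicit. Unset Printing Implicit Defensive.

(* Conventions: coordinates of (Delta^1)^N are indexed by 1..N (nat);
   vertices of an r-simplex are indexed by 0..r.  A simplex is given by its
   vertices: v p i : bool is the i-th coordinate of vertex p (false = 0, true = 1).
   Values of v outside these ranges are irrelevant (never inspected). *)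
Definition simplex_data := nat -> nat -> bool.

Definition is_simplex (N r : nat) (v : simplex_data) : Prop :=
  forall p i, p < r -> 1 <= i <= N -> v p i <= v p.+1 i.

Inductive ext := Fin of nat | PInf | MInf.

(* phi(i) = +oo if coordinate i of the last vertex is 0; -oo if coordinate i of
   vertex 0 is 1; otherwise the p with coordinate i of vertex p-1 equal 0 and of
   vertex p equal 1, i.e. the number of vertices q in 0..r with coordinate 0. *)
Definition phi_of (r : nat) (v : simplex_data) (i : nat) : ext :=
  if ~~ v r i then PInf
  else if v 0 i then MInf
  else Fin (\sum_(q < r.+1) ~~ v q i).

Definition gray_unmarked (N r : nat) (phi : nat -> ext) : Prop :=
  exists s : nat -> nat,
    (forall p, 1 <= p <= r -> 1 <= s p <= N /\ phi (s p) = Fin p) /\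
    (forall p, 1 <= p < r -> s p < s p.+1).

Definition marked_cube (N r : nat) (v : simplex_data) : Prop :=
  ~ gray_unmarked N r (phi_of r v).

(* Marked r-simplices of (Delta^1)^{(x) m}_e : additionally iota_m marked. *)
Definition marked_cube_e (m r : nat) (v : simplex_data) : Prop :=
  marked_cube m r v \/
  (r = m /\ forall i, 1 <= i <= m -> phi_of r v i = Fin i).

Definition restr_front (i : nat) (v : simplex_data) : simplex_data := v.
Definition restr_back (i : nat) (v : simplex_data) : simplex_data :=
  fun p j => v (p + i) j.

Definition gray_tensor_marked (MX MY : nat -> simplex_data -> Prop)
    (r : nat) (x y : simplex_data) : Prop :=
  forall i, i <= r -> MX i (restr_front i x) \/ MY (r - i) (restr_back i y).

(* Identification (Delta^1)^m x (Delta^1)^n = (Delta^1)^(m+n):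
   first m coordinates from the first factor. *)
Definition first_part (m : nat) (v : simplex_data) : simplex_data := v.
Definition second_part (m : nat) (v : simplex_data) : simplex_data :=
  fun p j => v p (j + m).

From mathcomp Require Import all_boot zify.

Set Implicit Arguments.
Unset Strict Implicit.

(* An r-simplex of (Delta^1)^N is unmarked in the Gray tensor
   power iff its function phi admits a "chain": indices i_1 < ... < i_r with
   phi(i_p) = p.  We work with chains whose positions range over an interval
   [a, b] and whose values lie in a window (lo, hi] of coordinates.
   - For a monotone bit sequence, phi takes the value p exactly at a 0 -> 1
     transition between vertices p-1 and p; hence phi is compatible with
     restricting to the front vertices {0..k} and, up to a shift by k, to the
     back vertices {k..r}.
   - Chains can be restricted, reindexed, split at any value threshold, and a
     chain with l positions needs a window of at least l coordinates.
   - Consequently, at a split vertex k, the front factor is marked iff there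
     is no chain on [1, k] inside the first m coordinates, and the back factor
     is marked iff there is no chain on [k+1, r] inside the last n ones.
   The theorem follows: a global chain splits at some vertex c into a front
   and a back chain, which forces c = m and the identity marking iota_m, and a
   chain as in condition (3) would leave vertex m - 1 unmarked; conversely,
   conditions (1)-(3) make each split vertex k < m, k > m, k = m marked. *)

Lemma homo_leq_interval (T : Type) (f : nat -> T) (rel : T -> T -> Prop) a b :
  (forall x, rel x x) -> (forall y x z, rel x y -> rel y z -> rel x z) ->
  (forall i, a <= i < b -> rel (f i) (f i.+1)) ->
  forall i j, a <= i -> i <= j -> j <= b -> rel (f i) (f j).
Proof.
move=> refl trans step i j ai ij jb.
apply: (homo_leq_in (D := [pred k | a <= k <= b]) (f := f) (r := rel) refl trans) => //=.
- by move=> x y /andP[ax _] /andP[_ yb] k /andP[xk ky]; apply/andP; lia.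
- by move=> k /andP[ak _] /andP[_ kb]; apply: step; lia.
- by apply/andP; lia.
- by apply/andP; lia.
Qed.

Section MonotoneBits.

Variables (b : nat -> bool) (r : nat).
Hypothesis b_step : forall q, q < r -> b q <= b q.+1.

Lemma bits_mono p q : p <= q -> q <= r -> b p -> b q.
Proof.
move=> pq qr bp.
have le_bits : b p <= b q.
  apply: (homo_leq_interval (f := b) (rel := fun x y : bool => x <= y) (a := 0) (b := r)) => //.
  by move=> y x z; exact: leq_trans.
by move: le_bits; rewrite bp lt0b.
Qed.

Lemma count_zero_bits t : 0 < t <= r -> ~~ b t.-1 -> b t ->
  \sum_(q < r.+1) ~~ b q = t.
Proof.
move=> /andP[t0 tr] bt1 bt.
rewrite -(big_mkord xpredT (fun q => nat_of_bool (~~ b q))).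
rewrite (big_cat_nat _ (n := t)) //=; last lia.
rewrite (eq_big_nat _ _ (F2 := fun=> 1)); last first.
  move=> i /andP[_ it]; apply/eqP; rewrite eqb1; apply: contra bt1.
  by apply: bits_mono; lia.
rewrite (eq_big_nat _ _ (F1 := fun q => nat_of_bool (~~ b q)) (F2 := fun=> 0)); last first.
  by move=> i /andP[ti ir]; rewrite (@bits_mono t i) //; lia.
by rewrite !sum_nat_const_nat; lia.
Qed.

End MonotoneBits.

Definition coord_mono (r : nat) (v : simplex_data) (j : nat) : Prop :=
  forall q, q < r -> v q j <= v q.+1 j.

Lemma phi_ofE r v j p : coord_mono r v j ->
  phi_of r v j = Fin p <-> [/\ 0 < p, p <= r, ~~ v p.-1 j & v p j].
Proof.
move=> mono; have bmono := bits_mono mono; rewrite /phi_of; split.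
  case vr: (v r j) => //=; case v0: (v 0 j) => //= -[<-].
  have [t vt tmin] := ex_minnP (ex_intro (fun i => v i j) r vr).
  have t0 : 0 < t by case: t vt tmin => //; rewrite v0.
  have tr : t <= r := tmin r vr.
  have vt1 : ~~ v t.-1 j by apply/negP => /tmin; lia.
  by rewrite (count_zero_bits mono _ vt1 vt) //; apply/andP.
case=> p0 pr vp1 vp; rewrite (bmono p r) //=.
have -> : v 0 j = false by apply: contraNF vp1 => v0; rewrite (bmono 0) //; lia.
by rewrite (count_zero_bits mono _ vp1 vp) //; apply/andP.
Qed.

Lemma phi_of_front r k v j p : coord_mono r v j -> k <= r -> 0 < p <= k ->
  phi_of k v j = Fin p <-> phi_of r v j = Fin p.
Proof.
move=> mono kr pk; have monok : coord_mono k v j by move=> q qk; apply: mono; lia.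
by rewrite (phi_ofE _ monok) (phi_ofE _ mono); split; case=> *; split=> //; lia.
Qed.

Lemma phi_of_back r k w j q : coord_mono r w j -> k <= r -> 0 < q ->
  phi_of (r - k) (restr_back k w) j = Fin q <-> phi_of r w j = Fin (q + k).
Proof.
move=> mono kr q0.
have monok : coord_mono (r - k) (restr_back k w) j.
  by move=> p pk; rewrite /restr_back addSn; apply: mono; lia.
rewrite (phi_ofE _ monok) (phi_ofE _ mono) /restr_back.
have -> : q.-1 + k = (q + k).-1 by lia.
by split; case=> *; split=> //; lia.
Qed.

Definition chain (phi : nat -> ext) (lo hi a b : nat) (s : nat -> nat) : Prop :=
  (forall p, a <= p <= b -> lo < s p <= hi /\ phi (s p) = Fin p) /\
  (forall p, a <= p < b -> s p < s p.+1).

Lemma marked_cubeE N r v :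
  marked_cube N r v <-> ~ exists s, chain (phi_of r v) 0 N 1 r s.
Proof. exact: iff_refl. Qed.

Section Chains.

Variables (phi : nat -> ext) (lo hi a b : nat) (s : nat -> nat).

Lemma chain_sub a' b' : chain phi lo hi a b s -> a <= a' -> b' <= b ->
  chain phi lo hi a' b' s.
Proof. by move=> [vals incr] aa' bb'; split=> p hp; [apply: vals | apply: incr]; lia. Qed.

Lemma chain_mono : chain phi lo hi a b s ->
  forall p q, a <= p -> p <= q -> q <= b -> s p <= s q.
Proof.
move=> [_ incr]; apply: (homo_leq_interval (f := s) (rel := leq) (a := a) (b := b)) => //.
- by move=> y x z; exact: leq_trans.
- by move=> i /incr /ltnW.
Qed.

Lemma chain_length : chain phi lo hi a b s -> a <= b -> b - a < hi - lo.
Proof.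
move=> [vals incr] ab.
have grow : s a + (b - a) <= s b + (b - b).
  apply: (homo_leq_interval (f := fun i => s i + (b - i)) (rel := leq) (a := a) (b := b)) => //.
  - by move=> y x z; exact: leq_trans.
  - by move=> i hib; have := incr i hib; lia.
by have := vals a ltac:(lia); have := vals b ltac:(lia); lia.
Qed.

Lemma chain_split mid : chain phi lo hi a b s -> 0 < a <= b.+1 -> lo <= mid <= hi ->
  exists c, [/\ a <= c.+1 <= b.+1, chain phi lo mid a c s & chain phi mid hi c.+1 b s].
Proof.
move=> ch ab lmh; have [vals incr] := ch.
pose low p := (a.-1 <= p <= b) && ((p < a) || (s p <= mid)).
have low_ex : exists p, low p by exists a.-1; apply/andP; split; [apply/andP | ]; lia.
have low_ub p : low p -> p <= b by case/andP=> /andP[].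
have [c /andP[/andP[ac cb] hc] cmax] := ex_maxnP low_ex low_ub.
have hcmid : forall p, a <= p <= c -> s p <= mid.
  move=> p hp; case/orP: hc => [|scm]; first lia.
  by apply: leq_trans scm; apply: (chain_mono ch); lia.
exists c; split; first by apply/andP; lia.
- split=> p hp; last by apply: incr; lia.
  by have [? ?] := vals p ltac:(lia); have := hcmid p hp; split=> //; lia.
- split=> p hp; last by apply: incr; lia.
  have [hs hphi] := vals p ltac:(lia); split=> //.
  suff : mid < s p by lia.
  rewrite ltnNge; apply/negP => spm.
  by have := cmax p; rewrite /low spm orbT andbT => /(_ ltac:(lia)); lia.
Qed.

End Chains.

Lemma chain_ext phi psi lo hi a b s :
  (forall j p, lo < j <= hi -> a <= p <= b -> phi j = Fin p <-> psi j = Fin p) ->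
  chain phi lo hi a b s <-> chain psi lo hi a b s.
Proof.
move=> eq_phi; split=> -[vals incr]; split=> // p hp;
  by have [hs hphi] := vals p hp; split=> //; apply/(eq_phi _ _ hs hp).
Qed.

Lemma chain_shift phi psi m n k r : k <= r ->
  (forall j q, 0 < j <= n -> 0 < q <= r - k ->
     psi j = Fin q <-> phi (j + m) = Fin (q + k)) ->
  (exists t, chain psi 0 n 1 (r - k) t) <-> (exists s, chain phi m (m + n) k.+1 r s).
Proof.
move=> kr shift; split=> -[t [vals incr]].
- exists (fun p => t (p - k) + m); split=> p hp.
    have [ht hpsi] := vals (p - k) ltac:(lia); split; first lia.
    have := (shift (t (p - k)) (p - k) ht ltac:(lia)).1 hpsi.
    by rewrite subnK //; lia.
  have -> : p.+1 - k = (p - k).+1 by lia.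
  by have := incr (p - k) ltac:(lia); lia.
- exists (fun q => t (q + k) - m); split=> q hq.
    have [ht hphi] := vals (q + k) ltac:(lia); split; first lia.
    apply/(shift (t (q + k) - m) q ltac:(lia) ltac:(lia)).
    by rewrite subnK //; lia.
  have := incr (q + k) ltac:(lia); have := vals (q + k) ltac:(lia).
  by have := vals (q.+1 + k) ltac:(lia); rewrite addSn; lia.
Qed.

Section SplitVertex.

Variables (m n r : nat) (v : simplex_data).
Hypothesis v_simplex : is_simplex (m + n) r v.

Let coord_mono_v j : 1 <= j <= m + n -> coord_mono r v j.
Proof. by move=> hj q qr; apply: v_simplex. Qed.

Lemma front_marked_e k : k <= r ->
  marked_cube_e m k (restr_front k (first_part m v)) <->
  (~ exists s, chain (phi_of r v) 0 m 1 k s) \/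
  (k = m /\ forall i, 1 <= i <= m -> phi_of r v i = Fin i).
Proof.
move=> kr; have front j p : 0 < j <= m -> 0 < p <= k ->
    phi_of k v j = Fin p <-> phi_of r v j = Fin p.
  by move=> hj hp; apply: phi_of_front => //; apply: coord_mono_v; lia.
rewrite /marked_cube_e marked_cubeE; split=> -[nochain | [km iota]].
- by left=> -[s /(chain_ext _ front) ch]; apply: nochain; exists s.
- by right; split=> // i hi; apply/front; rewrite ?iota //; lia.
- by left=> -[s /(chain_ext _ front) ch]; apply: nochain; exists s.
- by right; split=> // i hi; apply/front; rewrite -?iota //; lia.
Qed.

Lemma back_marked k : k <= r ->
  marked_cube n (r - k) (restr_back k (second_part m v)) <->
  ~ exists s, chain (phi_of r v) m (m + n) k.+1 r s.
Proof.
move=> kr; rewrite marked_cubeE.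
rewrite -(chain_shift (psi := phi_of (r - k) (restr_back k (second_part m v))) (n := n) kr) //.
by move=> j q hj hq; apply: phi_of_back => //; [apply: coord_mono_v | ]; lia.
Qed.

End SplitVertex.

Unset Implicit Arguments.

Theorem lemma6p5 (m n r : nat) (v : simplex_data) :
  1 <= m ->
  is_simplex (m + n) r v ->
  gray_unmarked (m + n) r (phi_of r v) ->
  (gray_tensor_marked (marked_cube_e m) (marked_cube n) r
      (first_part m v) (second_part m v)
   <->
   [/\ m <= r,
       (forall i, 1 <= i <= m -> phi_of r v i = Fin i) &
       ~ (exists s : nat -> nat,
            (forall p, m <= p <= r -> m < s p <= m + n /\ phi_of r v (s p) = Fin p) /\
            (forall p, m <= p < r -> s p < s p.+1))]).
Proof.
move=> m_gt0 v_simplex [s global_chain].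
have front := front_marked_e v_simplex.
have back := back_marked v_simplex.
split=> [tensor | [mr iota nochain] k kr].
- (* Split the global chain where its values leave the first m coordinates. *)
  have [c [/andP[_ cr] front_chain back_chain]] :=
    chain_split (mid := m) global_chain ltac:(lia) ltac:(lia).
  case: (tensor c cr) => [/(front c cr) [no_front | [cm iota]] | /(back c cr) no_back];
    [by case: no_front; exists s | | by case: no_back; exists s].
  subst c; split=> // -[t tail_chain].
  (* At the split vertex m - 1 both factors would be unmarked. *)
  have m1r : m.-1 <= r by lia.
  case: (tensor m.-1 m1r) => [/(front _ m1r) [no_front | [] ] | /(back _ m1r) no_back].
  + by apply: no_front; exists id; split=> p hp /=; [split; [lia | apply: iota] | ]; lia.
  + lia.
  + by apply: no_back; exists t; rewrite prednK.
- case: (ltngtP k m) => [km | mk | ->].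
  + right; apply/(back k kr) => -[t back_chain].
    by apply: nochain; exists t; apply: (chain_sub back_chain); lia.
  + left; apply/(front k kr); left=> -[t front_chain].
    by have := chain_length front_chain; lia.
  + by left; apply/(front m mr); right.
Qed.
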